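(* Let $d_0<d_1<d_2<\cdots$ be the increasing enumeration of $\mathcal{D}=\{m\ge1:\ c_m=0\}$ (so $d_0=3$), and for $n\ge0$ let $z_n=\left(\frac{d_{4n}+1}{4}-n\right)\bmod 2\in\{0,1\}$ (here $\frac{d_{4n}+1}{4}$ is an integer). Then $z_n=1$ if and only if $n$ can be written as $n=\sum_{i=0}^{s}2^{n_i-1}(2^{n_i}-1)$ for some (possibly empty, giving $n=0$) strictly increasing sequence of integers $1<n_0<n_1<\cdots<n_s$.
   Context: For $n\in\mathbb{N}$ let $s_2(n)$ be the sum of the binary digits of $n$ and $t_n=s_2(n)\bmod 2$ (the Prouhet–Thue–Morse sequence). Let $F(X)=\sum_{n\ge1}t_nX^n\in\mathbb{F}_2[[X]]$ and let $G(X)=\sum_{n\ge1}c_nX^n\in\mathbb{F}_2[[X]]$ be its compositional inverse, i.e. $F(G(X))=G(F(X))=X$. The $c_n$ are identified with integers in $\{0,1\}$. *)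

From HB Require Import structures.
From mathcomp Require Import all_boot all_order all_algebra.
Set Implicit Arguments. Unset Strict Implicit. Unset Printing Implicit Defensive.
Import GRing.Theory.
Local Open Scope ring_scope.

(* s_2(n): sum of binary digits of n (fuel n suffices since n./2 < n for n > 0). *)
Fixpoint s2_aux (fuel n : nat) : nat :=
  match fuel with
  | 0 => 0
  | f.+1 => (odd n + s2_aux f n./2)%N
  end.
Definition s2 (n : nat) : nat := s2_aux n n.

Definition tm (n : nat) : nat := (s2 n %% 2)%N.

(* Truncation to degree N of F(X) = sum_{n>=1} t_n X^n in F_2[[X]] *)
Definition Ftrunc (N : nat) : {poly 'F_2} :=
  \poly_(i < N.+1) (if i == 0%N then 0 else (tm i)%:R).

(* Truncation to degree N of G(X) = sum_{n>=1} c_n X^n (c_n in {0,1} as bool) *)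
Definition Gtrunc (c : nat -> bool) (N : nat) : {poly 'F_2} :=
  \poly_(i < N.+1) (if i == 0%N then 0 else (c i)%:R).

(* Since F and G have zero constant term, the coefficients of degree <= N of
   the compositions only depend on the truncations to degree N. *)
Definition is_comp_inverse (c : nat -> bool) : Prop :=
  forall N k : nat, (k <= N)%N ->
    ((Ftrunc N \Po Gtrunc c N)`_k = (k == 1%N)%:R) /\
    ((Gtrunc c N \Po Ftrunc N)`_k = (k == 1%N)%:R).

Definition zseq (d : nat -> nat) (n : nat) : int :=
  (((((d (4 * n)%N).+1 %/ 4)%N)%:Z - n%:Z) %% 2)%Z.

Definition representable (n : nat) : Prop :=
  exists s : seq nat, sorted ltn s /\ all (fun x => 1 < x)%N s /\
    n = (\sum_(x <- s) 2 ^ (x.-1) * (2 ^ x - 1))%N.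

From HB Require Import structures.
From mathcomp Require Import all_boot all_order all_algebra.
From mathcomp Require Import zify ring.
Set Implicit Arguments. Unset Strict Implicit. Unset Printing Implicit Defensive.
Import GRing.Theory.

(* Over F_2 the Thue-Morse series satisfies X + (1+X)^2 F + (1+X)^3 F^2 = 0, because
   t_(2n+b) = b + t_n and F(X^2) = F^2.  Substituting the inverse G shows that
   W = 1 + X (1 + G) is a cube root of 1 + X.  Such a cube root with constant term 1 is
   unique, and (1+X)^3 T(X^4) is one, where T = prod_k (1 + X^(2*4^k)) is the series of the
   integers 2 s(b), s(b) the Moser-de Bruijn numbers: T = (1+X^2) T(X^4) gives
   (1+X)^2 T^3 = 1.  Hence c_m = 0 iff (m+1)/4 is not of the form 2 s(b), so D is the union
   of the blocks {4j+3, ..., 4j+6} over the j for which j+1 is not of this form, and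
   d_(4n) = 4j+3 where n counts the positive integers up to j not of this form.  Then z_n is the parity of the number of b with
   2 s(b) <= j, which is odd exactly when j = 8 s(b); in that case n = 8 s(b) - 2b, the sum
   of 2^(k+1) (2^(k+2) - 1) over the binary digits k of b. *)

Section BinaryRecursion.
Variables (A : Type) (a0 : A) (step : bool -> A -> A).
Hypothesis step_false0 : step false a0 = a0.

(* Recursion on the binary digits of [n]; a fuel of [n] always suffices. *)
Fixpoint binrec_aux (fuel n : nat) : A :=
  if fuel is f.+1 then step (odd n) (binrec_aux f n./2) else a0.

Definition binrec (n : nat) : A := binrec_aux n n.

Lemma binrec_aux0 f : binrec_aux f 0 = a0.
Proof. by elim: f => //= f ->. Qed.

Lemma binrec_aux_fuel f g n : n <= f -> n <= g -> binrec_aux f n = binrec_aux g n.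
Proof.
elim: f g n => [|f IHf] [|g] n //= lenf leng;
  try by rewrite (_ : n = 0) ?binrec_aux0 //; lia.
by rewrite (IHf g) //; have := odd_double_half n; lia.
Qed.

Lemma binrec_bit (b : bool) n : binrec (2 * n + b) = step b (binrec n).
Proof.
have [oddk halfk] : odd (2 * n + b) = b /\ (2 * n + b)./2 = n.
  by rewrite mul2n addnC half_bit_double oddD odd_double addbF; case: b.
rewrite /binrec; case E : (2 * n + b) oddk halfk => [|m] oddk halfk.
  by case: n b E {oddk halfk} => [|n] [].
rewrite -[binrec_aux m.+1 _]/(step (odd m.+1) (binrec_aux m m.+1./2)) oddk halfk.
by congr (step _ _); apply: binrec_aux_fuel; lia.
Qed.

End BinaryRecursion.

Lemma s2_bit (b : bool) n : s2 (2 * n + b) = b + s2 n.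
Proof.
have s2E m : s2 m = binrec 0 (fun b r => b + r) m.
  by rewrite /s2 /binrec; elim: m {1 3}m => //= m IHm k; rewrite IHm.
by rewrite !s2E binrec_bit.
Qed.

Definition spread (b : nat) : nat := binrec 0 (fun e r => e + 4 * r) b.

Lemma spread_bit (e : bool) n : spread (2 * n + e) = e + 4 * spread n.
Proof. exact: binrec_bit. Qed.

Lemma spreadE n : spread n = odd n + 4 * spread n./2.
Proof. by rewrite -spread_bit mul2n addnC odd_double_half. Qed.

Lemma spread_double n : spread (2 * n) = 4 * spread n.
Proof. by rewrite -[2 * n]addn0 (spread_bit false). Qed.

Lemma spread_doubleS n : spread (2 * n).+1 = (4 * spread n).+1.
Proof. by rewrite -addn1 (spread_bit true). Qed.

Lemma leq_spread n : n <= spread n.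
Proof.
elim/ltn_ind: n => n IHn; rewrite spreadE; case: (posnP n) => [-> // | n0].
by have := IHn n./2; have := odd_double_half n; lia.
Qed.

Lemma spread_incr n : spread n < spread n.+1.
Proof.
elim/ltn_ind: n => n IHn; have Hn := odd_double_half n; set m := n./2 in Hn.
have IHm : 0 < n -> spread m < spread m.+1 by move=> n0; apply: IHn; lia.
case: (odd n) Hn => /= Hn; rewrite -{}Hn -mul2n in IHm *.
  rewrite add1n spread_doubleS (_ : (2 * m).+2 = 2 * m.+1) ?spread_double; lia.
by rewrite add0n spread_double spread_doubleS.
Qed.

Lemma spread_pow b k : b < 2 ^ k -> spread (b + 2 ^ k) = spread b + 4 ^ k.
Proof.
elim: k b => [|k IHk] b ltbk; first by rewrite (_ : b = 0) //; lia.
have Hb := odd_double_half b; have ltb2k : b./2 < 2 ^ k by rewrite expnS in ltbk; lia.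
rewrite (_ : b + 2 ^ k.+1 = 2 * (b./2 + 2 ^ k) + odd b); last by rewrite expnS; lia.
by rewrite spread_bit IHk // (spreadE b) expnS; lia.
Qed.

Lemma quad_decomp k : exists t s, s < 4 /\ k = 4 * t + s.
Proof. by exists (k %/ 4), (k %% 4); split; lia. Qed.

(* [i] is twice a Moser-de Bruijn number: all base-4 digits of [i] are 0 or 2. *)
Definition in_dspread (i : nat) : bool := [exists b : 'I_i.+1, 2 * spread b == i].

Lemma in_dspreadP i : reflect (exists b, 2 * spread b = i) (in_dspread i).
Proof.
apply: (iffP existsP) => [[b /eqP <-] | [b Eb]]; first by exists b.
have ltbi : b < i.+1 by have := leq_spread b; lia.
by exists (Ordinal ltbi); rewrite Eb.
Qed.

Lemma in_dspread0 : in_dspread 0.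
Proof. by apply/in_dspreadP; exists 0. Qed.

Lemma in_dspread_quad t s : s < 4 ->
  in_dspread (4 * t + s) = ((s == 0) || (s == 2)) && in_dspread t.
Proof.
move=> lts4; apply/in_dspreadP/andP => [[b] | [s02 /in_dspreadP [b Eb]]].
  rewrite spreadE => Eb.
  split; first by case: (odd b) Eb => /= Eb; lia.
  by apply/in_dspreadP; exists b./2; case: (odd b) Eb => /= Eb; lia.
exists (2 * b + (s == 2)); rewrite spread_bit.
by case/orP: s02 => /eqP Es; rewrite Es /=; lia.
Qed.

Lemma count_iotaS (P : pred nat) x : count P (iota 0 x.+1) = count P (iota 0 x) + P x.
Proof. by rewrite -addn1 iotaD count_cat /= addn0. Qed.

Lemma count_iota_gap (P : pred nat) a b : a <= b ->
  (forall x, a <= x < b -> ~~ P x) -> count P (iota 0 b) = count P (iota 0 a).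
Proof.
move=> leab noP; rewrite -(subnKC leab) iotaD count_cat add0n.
rewrite [count P (iota a _)](@eq_in_count _ _ pred0) ?count_pred0 ?addn0 // => x.
by rewrite mem_iota => /andP [lax ltxb]; apply/negbTE/noP; lia.
Qed.

Lemma count_iota_inj (P : pred nat) x y : P x -> P y ->
  count P (iota 0 x) = count P (iota 0 y) -> x = y.
Proof.
have mono a b : a < b -> P a -> count P (iota 0 a) < count P (iota 0 b).
  by move=> ltab Pa; rewrite -(subnKC ltab) iotaD count_cat count_iotaS Pa; lia.
move=> Px Py Exy; case: (ltngtP x y) => // [ltxy | ltyx].
  by have := mono _ _ ltxy Px; lia.
by have := mono _ _ ltyx Py; lia.
Qed.

Section IncreasingEnumeration.
Variables (f : nat -> nat) (P : pred nat).
Hypothesis f_incr : forall i, f i < f i.+1.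
Hypothesis f_range : forall m, P m <-> exists k, f k = m.

Let f_mono : {mono f : i j / i < j}.
Proof. exact/leqW_mono/leq_mono/(homo_ltn ltn_trans). Qed.

Let notP_between k y : f k < y < f k.+1 -> ~~ P y.
Proof.
move=> /andP [lty ltyS]; apply/negP => /f_range [k' Ek'].
by move: lty ltyS; rewrite -Ek' !f_mono; lia.
Qed.

Lemma count_iota_enum k : count P (iota 0 (f k)) = k.
Proof.
elim: k => [|k IHk].
  rewrite (@count_iota_gap _ 0) // => y /andP [_ lty]; apply/negP => /f_range [k Ek].
  by move: lty; rewrite -Ek f_mono.
rewrite (@count_iota_gap _ (f k).+1) ?count_iotaS ?IHk //.
  by rewrite (_ : P (f k)) ?addn1 //; apply/f_range; exists k.
by move=> y ley; apply: (@notP_between k); lia.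
Qed.

Lemma count_iota_between k x : f k < x <= f k.+1 -> count P (iota 0 x) = k.+1.
Proof.
move=> /andP [ltx lex]; rewrite (@count_iota_gap _ (f k).+1) // ?count_iotaS.
  by rewrite count_iota_enum (_ : P (f k)) ?addn1 //; apply/f_range; exists k.
by move=> y ley; apply: (@notP_between k); lia.
Qed.

Lemma enum_bracket x : f 0 <= x -> exists k, f k <= x < f k.+1.
Proof.
elim: x => [|x IHx] lex.
  by exists 0; rewrite lex; apply: leq_trans (f_incr 0).
case: (ltngtP (f 0) x.+1) lex => // [lt0x | <-] _; last by exists 0; rewrite leqnn f_incr.
have [k /andP [lekx ltxk]] := IHx lt0x.
case: (ltngtP x.+1 (f k.+1)) ltxk => // [ltxk | ->] _; first by exists k; rewrite ltxk; lia.
by exists k.+1; rewrite leqnn f_incr.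
Qed.

End IncreasingEnumeration.

Lemma dspread_incr b : 2 * spread b < 2 * spread b.+1.
Proof. by rewrite ltn_pmul2l ?spread_incr. Qed.

Lemma dspread_range i : in_dspread i <-> exists b, 2 * spread b = i.
Proof. by split=> /in_dspreadP. Qed.

Lemma count_dspread_spread b : count in_dspread (iota 0 (8 * spread b).+1) = (2 * b).+1.
Proof.
apply: (count_iota_between dspread_incr dspread_range).
by rewrite spread_doubleS spread_double; lia.
Qed.

Lemma count_dspread_odd j : ~~ in_dspread j.+1 ->
  odd (count in_dspread (iota 0 j.+1)) -> exists b, j = 8 * spread b.
Proof.
(* j lies in [2 s(k), 2 s(k+1)) with k even, and j + 1 = 2 s(k+1) is excluded. *)
move=> notTj; have [k /andP [lekj ltjk]] := enum_bracket dspread_incr (leq0n j).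
rewrite (count_iota_between dspread_incr dspread_range (k := k)) /=; last lia.
move=> evk; have Ek : k = 2 * k./2 by rewrite -[LHS]odd_double_half (negbTE evk) mul2n.
rewrite Ek spread_double in lekj; rewrite Ek spread_doubleS in ltjk.
exists k./2; have [// | Ej] : j = 8 * spread k./2 \/ j = (8 * spread k./2).+1 by lia.
by case/negP: notTj; apply/in_dspreadP; exists (2 * k./2).+1; rewrite spread_doubleS Ej; lia.
Qed.

Definition rep_term (x : nat) : nat := 2 ^ x.-1 * (2 ^ x - 1).

(* The sum of [rep_term (k + 2)] over the binary digits [k] of [b] (see rep_step). *)
Definition rep (b : nat) : nat := 8 * spread b - 2 * b.

Lemma rep_step b k : b < 2 ^ k -> rep (b + 2 ^ k) = rep b + rep_term k.+2.
Proof.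
move=> ltbk; rewrite /rep /rep_term spread_pow // (_ : 4 = 2 * 2) // expnMn /= !expnS.
by have := leq_spread b; move: ltbk; case: (2 ^ k) => [|p]; nia.
Qed.

Lemma sorted_ltn_rcons s x : sorted ltn (rcons s x) = sorted ltn s && all (ltn^~ x) s.
Proof.
rewrite -rev_sorted rev_rcons /= path_sortedE; last by move=> ? ? ? /= ? /ltn_trans; apply.
by rewrite all_rev rev_sorted andbC.
Qed.

Lemma rep_sorted k b : b < 2 ^ k ->
  exists s, [/\ sorted ltn s, all (fun x => 1 < x < k.+2) s & rep b = \sum_(x <- s) rep_term x].
Proof.
elim: k b => [|k IHk] b ltbk.
  by exists [::]; rewrite big_nil (_ : b = 0) //; lia.
case: (ltnP b (2 ^ k)) => [ltbk' | lekb].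
  have [s [sorted_s all_s ->]] := IHk b ltbk'; exists s; split => //.
  by apply: sub_all all_s => x /=; lia.
have ltbk' : b - 2 ^ k < 2 ^ k by rewrite expnS in ltbk; lia.
have [s [sorted_s all_s Hs]] := IHk _ ltbk'; exists (rcons s k.+2); split.
- by rewrite sorted_ltn_rcons sorted_s; apply: sub_all all_s => x /=; lia.
- by rewrite all_rcons /=; apply/andP; split; [lia | apply: sub_all all_s => x /=; lia].
- by rewrite -cats1 big_cat big_seq1 /= -Hs -rep_step // subnK.
Qed.

Lemma sorted_rep s : sorted ltn s -> all (leq 2) s ->
  exists b, rep b = \sum_(x <- s) rep_term x /\ forall k, all (ltn^~ k.+2) s -> b < 2 ^ k.
Proof.
elim/last_ind: s => [|s x IHs]; first by exists 0; rewrite big_nil; split => // k _; rewrite expn_gt0.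
rewrite sorted_ltn_rcons all_rcons => /andP [sorted_s lt_s_x] /andP [lex all_s].
have [b [Hb ltb]] := IHs sorted_s all_s.
have ltbx : b < 2 ^ (x - 2) by apply: ltb; apply: sub_all lt_s_x => y /=; lia.
exists (b + 2 ^ (x - 2)); split.
  by rewrite rep_step // -cats1 big_cat big_seq1 /= Hb; congr (_ + rep_term _); lia.
move=> k; rewrite all_rcons => /andP [/= ltxk _].
have : 2 ^ (x - 2) * 2 <= 2 ^ k by rewrite -expnSr leq_exp2l //; lia.
lia.
Qed.

Lemma representable_rep n : representable n <-> exists b, n = rep b.
Proof.
split=> [[s [sorted_s [all_s ->]]] | [b ->]].
  by have [b [Hb _]] := sorted_rep sorted_s all_s; exists b.
have [s [sorted_s all_s Hs]] := rep_sorted (ltn_expl b (ltnSn 1)).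
exists s; split; [done | split; last done].
by apply: sub_all all_s => x /andP [].
Qed.

Lemma count_predC_iota (P : pred nat) x :
  count (predC P) (iota 0 x) = x - count P (iota 0 x).
Proof. by have := count_predC P (iota 0 x); rewrite size_iota; lia. Qed.

Lemma odd_count_dspread j : ~~ in_dspread j.+1 ->
  odd (count in_dspread (iota 0 j.+1)) <->
  exists b, count (predC in_dspread) (iota 0 j.+1) = rep b.
Proof.
have count_rep b : count (predC in_dspread) (iota 0 (8 * spread b).+1) = rep b.
  by rewrite count_predC_iota count_dspread_spread /rep; have := leq_spread b; lia.
move=> notTj; split=> [/(count_dspread_odd notTj) [b ->] | [b Eb]]; first by exists b.
have notT : ~~ in_dspread (8 * spread b).+1.
  by apply/in_dspreadP => -[b' Eb']; lia.
have := count_iota_inj (P := predC in_dspread) notTj notT.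
by rewrite Eb count_rep => /(_ erefl) [->]; rewrite count_dspread_spread /= mul2n odd_double.
Qed.

(* The set D = {m >= 1 : c_m = 0}, once c is identified by comp_inverse_coef. *)
Definition inD (m : nat) : bool := (0 < m) && ~~ in_dspread ((m + 1) %/ 4).

Lemma inD_block j r : r < 4 -> inD (4 * j + 3 + r) = ~~ in_dspread j.+1.
Proof. by move=> ltr4; rewrite /inD (_ : (4 * j + 3 + r + 1) %/ 4 = j.+1); lia. Qed.

Lemma count_inD_tail j r : r <= 4 ->
  count inD (iota (4 * j + 3) r) = r * ~~ in_dspread j.+1.
Proof.
move=> ler4; rewrite (@eq_in_count _ _ (fun=> ~~ in_dspread j.+1)); last first.
  by move=> m; rewrite mem_iota => /andP [le3m ltm]; rewrite -(subnKC le3m) inD_block; lia.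
by case: (in_dspread _); rewrite /= ?count_pred0 ?count_predT ?size_iota ?muln0 ?muln1.
Qed.

Lemma count_inD j r : r <= 4 -> ~~ in_dspread j.+1 ->
  count inD (iota 0 (4 * j + 3 + r)) = 4 * count (predC in_dspread) (iota 0 j.+1) + r.
Proof.
have block i : count inD (iota 0 (4 * i + 3)) = 4 * count (predC in_dspread) (iota 0 i.+1).
  elim: i => [|i IHi]; first by rewrite /= /inD /= in_dspread0.
  rewrite (_ : 4 * i.+1 + 3 = 4 * i + 3 + 4); last lia.
  rewrite iotaD count_cat IHi count_inD_tail //.
  by rewrite [in RHS]count_iotaS mulnDr mulnC.
by move=> ler4 notTj; rewrite iotaD count_cat block count_inD_tail // notTj muln1.
Qed.

Lemma inD_split m : inD m -> exists j r, [/\ r < 4, m = 4 * j + 3 + r & ~~ in_dspread j.+1].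
Proof.
case/andP=> m0 notT; have le3m : 3 <= m.
  by case: m m0 notT => [|[|[|m]]] //; rewrite in_dspread0.
exists ((m - 3) %/ 4), ((m - 3) %% 4); split; try lia.
by rewrite (_ : ((m - 3) %/ 4).+1 = (m + 1) %/ 4) //; lia.
Qed.

Local Open Scope ring_scope.

Section TruncatedEquality.
Variable R : comNzRingType.
Implicit Types p q : {poly R}.

Definition eqXn n p q := forall k, (k < n)%N -> p`_k = q`_k.

Lemma eqXn_sym n p q : eqXn n p q -> eqXn n q p.
Proof. by move=> Hpq k ltkn; rewrite Hpq. Qed.

Lemma eqXn_trans n p q r : eqXn n p q -> eqXn n q r -> eqXn n p r.
Proof. by move=> Hpq Hqr k ltkn; rewrite Hpq ?Hqr. Qed.

Lemma eqXn_le m n p q : (m <= n)%N -> eqXn n p q -> eqXn m p q.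
Proof. by move=> lemn Hpq k ltkm; apply: Hpq; apply: leq_trans lemn. Qed.

Lemma eqXnD n p q p' q' : eqXn n p p' -> eqXn n q q' -> eqXn n (p + q) (p' + q').
Proof. by move=> Hp Hq k ltkn; rewrite !coefD Hp ?Hq. Qed.

Lemma eqXnM n p q p' q' : eqXn n p p' -> eqXn n q q' -> eqXn n (p * q) (p' * q').
Proof.
move=> Hp Hq k ltkn; rewrite !coefM; apply: eq_bigr => j _.
have ltjk := ltn_ord j.
by rewrite Hp ?Hq //; apply: leq_ltn_trans ltkn; rewrite ?leq_subr.
Qed.

Lemma eqXnX n p p' m : eqXn n p p' -> eqXn n (p ^+ m) (p' ^+ m).
Proof.
by move=> Hp; elim: m => [|m IHm] //; rewrite !exprS; apply: eqXnM.
Qed.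

Lemma eqXnP n p q : eqXn n p q <-> exists r, p - q = r * 'X^n.
Proof.
split=> [Hpq | [r Hr] k ltkn]; last first.
  by apply/eqP; rewrite -subr_eq0 -coefB Hr coefMXn ltkn.
exists (drop_poly n (p - q)); rewrite -{1}(poly_take_drop n (p - q)).
suff -> : take_poly n (p - q) = 0 by rewrite add0r.
apply/polyP=> i; rewrite coef_take_poly coef0 coefB.
by case: ifP => // /Hpq ->; rewrite subrr.
Qed.

Lemma eqXn_compl n p p' q : eqXn n p p' -> q`_0 = 0 -> eqXn n (p \Po q) (p' \Po q).
Proof.
move=> /eqXnP [r Hr] q0; apply/eqXnP.
have Xq : q = drop_poly 1 q * 'X.
  rewrite -{1}(poly_take_drop 1 q) expr1 -[RHS]add0r; congr (_ + _).
  by apply/polyP=> -[|i]; rewrite coef_take_poly coef0 ?q0.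
exists ((r \Po q) * drop_poly 1 q ^+ n).
by rewrite -comp_polyB Hr comp_polyM comp_Xn_poly {2}Xq exprMn mulrA.
Qed.

Lemma eqXn_cancel n p u : eqXn n (p * u) 0 -> u`_0 = 1 -> eqXn n p 0.
Proof.
move=> Hpu u0; elim: n Hpu => [|n IHn] Hpu k //; rewrite ltnS leq_eqVlt.
have Hp := IHn (eqXn_le (leqnSn n) Hpu).
case/orP=> [/eqP -> | ltkn]; last exact: Hp.
have := Hpu n (ltnSn n); rewrite coefM big_ord_recr /= subnn u0 mulr1 coef0.
by rewrite big1 ?add0r // => i _; rewrite Hp // coef0 mul0r.
Qed.

Lemma coef_XnM_comp_Xn m r s i p : (r < m)%N -> (s < m)%N ->
  ('X^r * (p \Po 'X^m))`_(m * i + s) = if s == r then p`_i else 0.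
Proof.
move=> ltrm ltsm; have m0 : (0 < m)%N by lia.
rewrite coefXnM coef_comp_poly_Xn //.
case: (ltnP (m * i + s) r) => [ltr | ler].
  by case: eqP => // esr; lia.
case: eqP => [-> | /eqP nesr]; first by rewrite addnK dvdn_mulr // mulKn.
case: ifP => // /dvdnP [k Hk]; case: (ltngtP k i) => [ltki | ltik | eki]; nia.
Qed.

End TruncatedEquality.

Lemma F2_natr2 : 2%:R = 0 :> 'F_2.
Proof. exact/val_inj. Qed.

Lemma polyF2_natr2 : 2%:R = 0 :> {poly 'F_2}.
Proof. by rewrite -polyC_natr F2_natr2. Qed.

Lemma F2_mulrr (x : 'F_2) : x * x = x.
Proof. by case: x => -[|[|m]] ltm2; apply/val_inj. Qed.

Lemma polyF2_sqr (p : {poly 'F_2}) : p ^+ 2 = p \Po 'X^2.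
Proof.
elim/poly_ind: p => [|p c IHp]; first by rewrite comp_poly0 expr0n.
rewrite comp_poly_MXaddC -IHp.
have -> : (p * 'X + c%:P) ^+ 2 = p ^+ 2 * 'X ^+ 2 + (c * c)%:P + 2%:R * (p * 'X * c%:P).
  by rewrite polyCM; ring.
by rewrite polyF2_natr2 mul0r addr0 F2_mulrr.
Qed.

Lemma polyF2_exp4 (p : {poly 'F_2}) : p ^+ 4 = p \Po 'X^4.
Proof.
have -> : 4%N = (2 * 2)%N by [].
by rewrite exprM (polyF2_sqr (p ^+ 2)) (polyF2_sqr p) -comp_polyA comp_Xn_poly -exprM.
Qed.

Definition tmF (k : nat) : 'F_2 := (s2 k)%:R.

Lemma tmF_bit (b : bool) n : tmF (2 * n + b) = b%:R + tmF n.
Proof. by rewrite /tmF s2_bit natrD. Qed.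

Lemma coef_Ftrunc N k : (k <= N)%N -> (Ftrunc N)`_k = tmF k.
Proof. by move=> lekN; rewrite coef_poly ltnS lekN /tm Fp_nat_mod //; case: k {lekN}. Qed.

Lemma Ftrunc_quadratic N :
  eqXn N.+1 ('X + (1 + 'X) ^+ 2 * Ftrunc N + (1 + 'X) ^+ 3 * Ftrunc N ^+ 2) 0.
Proof.
set F := Ftrunc N; set q := (F + 'X * F) \Po 'X^2.
(* (1+X)^3 F^2 = (1+X) q in characteristic 2; splitting it as X^0 q + X^1 q separates the
   even and odd coefficients. *)
have -> : 'X + (1 + 'X) ^+ 2 * F + (1 + 'X) ^+ 3 * F ^+ 2 =
    'X + F + 'X^2 * F + ('X^0 * q + 'X^1 * q).
  have -> : 'X + (1 + 'X) ^+ 2 * F + (1 + 'X) ^+ 3 * F ^+ 2 = 'X + F + 'X^2 * F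
      + ('X^0 * q + 'X^1 * q) + 2%:R * ('X * F + ('X + 'X^2) * (F \Po 'X^2)).
    by rewrite /q comp_polyD comp_polyM comp_polyX (polyF2_sqr F); ring.
  by rewrite polyF2_natr2 mul0r addr0.
move=> k ltkN; have [b [i Ek]] : exists (b : bool) i, k = (2 * i + b)%N.
  by exists (odd k), k./2; rewrite mul2n addnC odd_double_half.
rewrite {k}Ek in ltkN *.
rewrite coef0 !coefD coefX coefXnM !coef_XnM_comp_Xn ?ltnS ?leq_b1 //.
rewrite coefD coefXM !coef_Ftrunc; try lia.
case: i ltkN => [|i] ltkN; first by case: b ltkN => ltkN; apply/val_inj.
have [-> -> ->] : [/\ (2 * i.+1 + b == 1) = false, (2 * i.+1 + b <= 1) = false
                    & 2 * i.+1 + b - 2 = 2 * i + b]%N by split; lia.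
rewrite !tmF_bit /=; move: (b%:R : 'F_2) => x.
by case: b ltkN => ltkN /=; ring: F2_natr2.
Qed.

Lemma coef_Gtrunc c N k : (0 < k <= N)%N -> (Gtrunc c N)`_k = (c k)%:R.
Proof. by case/andP=> k0 lekN; rewrite coef_poly ltnS lekN; case: k k0 {lekN}. Qed.

Lemma coef0_Gtrunc c N : (Gtrunc c N)`_0 = 0.
Proof. by rewrite coef_poly. Qed.

Lemma Gtrunc_cube c N : is_comp_inverse c ->
  eqXn N.+2 ((1 + 'X * (1 + Gtrunc c N)) ^+ 3) (1 + 'X).
Proof.
move=> invFG; set G := Gtrunc c N; set F := Ftrunc N.
have FG : eqXn N.+1 (F \Po G) 'X.
  by move=> k ltkN; rewrite coefX; apply: (proj1 (invFG N k _)).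
have EG : eqXn N.+1 (G + (1 + G) ^+ 2 * 'X + (1 + G) ^+ 3 * 'X ^+ 2) 0.
  have := eqXn_compl (@Ftrunc_quadratic N) (coef0_Gtrunc c N).
  rewrite comp_poly0 !(rmorphD, rmorphM, rmorphXn, rmorph1) /= comp_polyX -/F -/G.
  apply: eqXn_trans; apply: eqXnD; first apply: eqXnD => //.
    by apply: eqXnM => //; apply: eqXn_sym.
  by apply: eqXnM => //; apply: eqXnX; apply: eqXn_sym.
have -> : (1 + 'X * (1 + G)) ^+ 3 = 1 + 'X + 'X * (G + (1 + G) ^+ 2 * 'X + (1 + G) ^+ 3 * 'X ^+ 2)
    + 2%:R * ('X * (1 + G) + ('X * (1 + G)) ^+ 2) by ring.
move=> k ltkN; rewrite polyF2_natr2 mul0r addr0 coefD coefXM.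
by case: k ltkN => [|k] ltkN /=; rewrite ?EG ?coef0 ?addr0.
Qed.

(* Truncation of T = prod_k (1 + X^(2*4^k)). *)
Definition Tser K : {poly 'F_2} := \poly_(i < K) (in_dspread i)%:R.

Lemma coef_Tser K i : (i < K)%N -> (Tser K)`_i = (in_dspread i)%:R.
Proof. by move=> ltiK; rewrite coef_poly ltiK. Qed.

Lemma Tser_rec K : eqXn K (Tser K) ((1 + 'X^2) * (Tser K \Po 'X^4)).
Proof.
move=> k ltkK; have [t [s [lts4 Ek]]] := quad_decomp k.
rewrite -(expr0 'X) mulrDl coefD Ek !coef_XnM_comp_Xn // coef_Tser ?in_dspread_quad -?Ek //.
rewrite coef_Tser; last lia.
by case: s lts4 {Ek} => [|[|[|[|s]]]] //= _; rewrite ?addr0 ?add0r.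
Qed.

Lemma Tser_cube K : eqXn K ((1 + 'X) ^+ 2 * Tser K ^+ 3) 1.
Proof.
case: K => [|K] //; set T := Tser K.+1.
suff H : eqXn K.+1 (1 - (1 + 'X) ^+ 2 * T ^+ 3) 0.
  by move=> k ltkK; apply/eqP; rewrite -subr_eq0 -opprB -coefB H ?coef0 ?oppr0.
apply: (@eqXn_cancel _ _ _ T); last by rewrite coef_Tser // in_dspread0.
have -> : (1 - (1 + 'X) ^+ 2 * T ^+ 3) * T = T - (1 + 'X^2) * T ^+ 4 - 2%:R * ('X * T ^+ 4).
  by ring.
rewrite polyF2_natr2 mul0r subr0 polyF2_exp4 => k ltkK.
by rewrite coefB (Tser_rec ltkK) subrr coef0.
Qed.

Definition Wser K : {poly 'F_2} := (1 + 'X) ^+ 3 * (Tser K \Po 'X^4).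

Lemma coef_Wser K p : (p < K)%N -> (Wser K)`_p = (in_dspread (p %/ 4))%:R.
Proof.
move=> ltpK; set q := Tser K \Po 'X^4.
have -> : Wser K = 'X^0 * q + 'X^1 * q + 'X^2 * q + 'X^3 * q + 2%:R * (('X + 'X^2) * q).
  by rewrite /Wser -/q; ring.
have [t [s [lts4 Ep]]] := quad_decomp p.
rewrite polyF2_natr2 mul0r addr0 !coefD Ep !coef_XnM_comp_Xn // coef_Tser; last lia.
rewrite (_ : (4 * t + s) %/ 4 = t)%N; last lia.
by case: s lts4 {Ep} => [|[|[|[|s]]]] //= _; rewrite ?addr0 ?add0r.
Qed.

Lemma Wser_cube K : eqXn K (Wser K ^+ 3) (1 + 'X).
Proof.
have -> : Wser K ^+ 3 = (1 + 'X) * ((1 + 'X) ^+ 2 * Tser K ^+ 3) ^+ 4.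
  by rewrite /Wser -polyF2_exp4; ring.
move=> k ltkK; rewrite (eqXnM (fun _ _ => erefl) (eqXnX 4 (@Tser_cube K))) //.
by rewrite expr1n mulr1.
Qed.

Lemma polyF2_cube_inj n (U V : {poly 'F_2}) :
  eqXn n (U ^+ 3) (V ^+ 3) -> U`_0 = 1 -> V`_0 = 1 -> eqXn n U V.
Proof.
move=> UV3 U0 V0; suff : eqXn n (U - V) 0.
  by move=> H k ltkn; apply/eqP; rewrite -subr_eq0 -coefB H ?coef0.
apply: (@eqXn_cancel _ _ _ (U ^+ 2 + U * V + V ^+ 2)).
  have -> : (U - V) * (U ^+ 2 + U * V + V ^+ 2) = U ^+ 3 - V ^+ 3 by ring.
  by move=> k ltkn; rewrite coefB UV3 // subrr coef0.
by rewrite !coefD !coef0M U0 V0 !mulr1; apply/val_inj.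
Qed.

Lemma comp_inverse_coef c m : is_comp_inverse c -> (0 < m)%N ->
  c m = in_dspread ((m + 1) %/ 4).
Proof.
move=> invFG; case: m => [//|m] _; set W := 1 + 'X * (1 + Gtrunc c m.+1).
have WW : eqXn m.+3 W (Wser m.+3).
  apply: polyF2_cube_inj; last by rewrite coef_Wser // in_dspread0.
    exact: eqXn_trans (Gtrunc_cube (N := m.+1) invFG) (eqXn_sym (@Wser_cube _)).
  by rewrite coefD coefXM coef1 addr0.
have := WW m.+2 (ltnSn _); rewrite coef_Wser // coefD coefXM coefD !coef1 coef_Gtrunc //=.
rewrite !mulr0n !add0r addn1.
by case: (c _); case: (in_dspread _) => // /(congr1 val).
Qed.

Local Close Scope ring_scope.

Theorem mainTheorem11 (c : nat -> bool) (d : nat -> nat) :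
  is_comp_inverse c ->
  (forall i : nat, (d i < d i.+1)%N) ->
  (forall m : nat, ((0 < m)%N /\ c m = false) <-> exists k : nat, d k = m) ->
  forall n : nat, zseq d n = 1%Z <-> representable n.
Proof.
move=> invFG d_incr d_range n.
have inD_range m : inD m <-> exists k, d k = m.
  apply: iff_trans (d_range m); rewrite /inD; case: (posnP m) => [-> | m0].
    by split=> -[].
  by rewrite (comp_inverse_coef invFG m0); case: (in_dspread _); split=> // -[].
have [j [r [ltr4 Ed notTj]]] := inD_split (proj2 (inD_range _) (ex_intro _ (4 * n) erefl)).
have := count_iota_enum d_incr inD_range (4 * n); rewrite Ed count_inD // ?notTj; last lia.
move=> Hn; have {Hn} [r0 En] : r = 0 /\ n = count (predC in_dspread) (iota 0 j.+1) by lia.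
have -> : zseq d n = Posz (odd (count in_dspread (iota 0 j.+1))).
  rewrite /zseq Ed r0 (_ : (4 * j + 3 + 0).+1 %/ 4 = j.+1); last lia.
  rewrite subzn; last by rewrite En count_predC_iota; lia.
  rewrite modz_nat En count_predC_iota subKn -?[(1 + 1)%N]/2 ?modn2 //.
  by have := count_size in_dspread (iota 0 j.+1); rewrite size_iota.
by rewrite representable_rep En -odd_count_dspread //; case: (odd _).
Qed.
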